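(* Let $f$ be the solution of the radial Loewner PDE $$\frac{\partial f}{\partial t}(z,t)=-z f'(z,t)\,\frac{e^{it}+z}{e^{it}-z},\qquad f(z,0)=z,$$ on $\mathbb{D}\times[0,\infty)$, and let $\gamma(t)=f(e^{it},t)=\phi^{-1}(e^{(i-1)t}\phi(1))$ with $\phi(z)=z(z-i)^{i-1}$. Then $\gamma$ leaves the unit circle orthogonally at $1$: $\lim_{t\to0^+}\operatorname{Arg}(1-\gamma(t))=0$.
   Context: $\mathbb{D}$ is the unit disc, $f'=\partial f/\partial z$; $\phi$ is univalent on $\mathbb{D}$ with the power defined via a holomorphic branch of $\log(z-i)$ on $\mathbb{D}$. $\operatorname{Arg}$ denotes the principal argument. *)

From Stdlib Require Import Reals.
From Coquelicot Require Import Coquelicot.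
Open Scope R_scope.

(* Principal argument Arg z in (-PI, PI] (atan2 convention), Arg 0 := 0. *)
Definition Arg (z : C) : R :=
  let x := fst z in let y := snd z in
  if Rlt_dec 0 x then atan (y / x)
  else if Rlt_dec x 0 then
    (if Rle_dec 0 y then atan (y / x) + PI else atan (y / x) - PI)
  else
    if Rlt_dec 0 y then PI / 2
    else if Rlt_dec y 0 then - (PI / 2) else 0.

Definition Cexp (z : C) : C :=
  (exp (fst z) * cos (snd z), exp (fst z) * sin (snd z)).

Definition Clog (z : C) : C := (ln (Cmod z), Arg z).

Definition Cpow (z w : C) : C := Cexp (w * Clog z).

(* phi z = z (z - i)^(i - 1); on the unit disc z - i has negative imaginary
   part, so the principal branch of log (z - i) is holomorphic there. *)
Definition phi (z : C) : C := z * Cpow (z - Ci) (Ci - 1).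

Definition in_disc (z : C) : Prop := Cmod z < 1.

From Pilot Require Import Defs.
From Stdlib Require Import Reals Lra Psatz.
From Coquelicot Require Import Coquelicot.
Open Scope R_scope.

(* Write γ(t) = e^ζ with ζ = x + i y and x < 0.  Along s ↦ e^{sζ}, 0 <= s <= 1, the
   point w(s) = e^{sζ} - i stays in the lower half-plane, where the principal logarithm
   is smooth, and taking logarithms in φ(γ(t)) = e^{(i-1)t} φ(1) gives
   ζ + (i-1) (log w(1) - log w(0)) = (i-1) t.  Since
   2 log w(s) = 2 log (1-i) + (1+i) sζ + s²ζ²/2 + O(|ζ|³), the linear terms cancel and
   ζ²/2 = 2t + O(|ζ|³).  A monotonicity argument for
   Re (conj ζ (sζ - 2 (log w(s) - log w(0)))) gives the a priori bound |ζ|² <= 24 t for small t, so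
   x² - y² ~ 4t while xy = O(t^{3/2}); hence y/x -> 0 and Arg (1 - e^ζ) -> 0. *)

Lemma MVT_unit_interval (f df : R -> R) :
  (forall s, 0 <= s <= 1 -> is_derive f s (df s)) ->
  exists c, 0 <= c <= 1 /\ f 1 - f 0 = df c.
Proof.
  intros Hf.
  destruct (MVT_cor3 f df 0 1) as (c & Hc0 & Hc1 & Hfc); [lra| |].
  - intros s Hs0 Hs1. apply is_derive_Reals, Hf. lra.
  - exists c. split; [lra|]. rewrite Hfc. ring.
Qed.

Lemma Rabs_sin_le u : Rabs (sin u) <= Rabs u.
Proof.
  assert (H := bounded_variation sin cos 1 0 u).
  rewrite sin_0, !Rminus_0_r, Rmult_1_l in H. apply H.
  intros t _. split.
  - apply is_derive_Reals, derivable_pt_lim_sin.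
  - apply Rabs_le, COS_bound.
Qed.

Lemma one_sub_cos_bound u : 0 <= 1 - cos u <= u^2 / 2.
Proof.
  assert (Hc : cos u = 1 - 2 * sin (u/2) * sin (u/2))
    by (rewrite <- cos_2a_sin; f_equal; field).
  assert (Hs : sin (u/2) ^ 2 <= (u/2) ^ 2).
  { rewrite <- (pow2_abs (sin _)), <- (pow2_abs (u/2)).
    apply pow_incr. split; [apply Rabs_pos | apply Rabs_sin_le]. }
  rewrite Hc. split; nra.
Qed.

Lemma Rabs_sin_sub_le u : Rabs (sin u - u) <= u^2 / 2 * Rabs u.
Proof.
  assert (H := bounded_variation (fun t => sin t - t) (fun t => cos t - 1) (u^2/2) 0 u).
  cbv beta in H. rewrite sin_0, !Rminus_0_r in H. apply H.
  intros t Ht. rewrite Rminus_0_r in Ht. split.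
  - auto_derive; [exact I | ring].
  - assert (Hc := one_sub_cos_bound t).
    assert (t^2 <= u^2).
    { rewrite <- (pow2_abs t), <- (pow2_abs u). apply pow_incr. split; [apply Rabs_pos | exact Ht]. }
    rewrite Rabs_left1; lra.
Qed.

Lemma exp_le_1 a : a <= 0 -> exp a <= 1.
Proof.
  intros Ha. rewrite <- exp_0.
  destruct (Rle_lt_or_eq_dec a 0 Ha) as [Hlt | ->]; [left; apply exp_increasing, Hlt | lra].
Qed.

Lemma Rabs_exp_sub_1_le a : a <= 0 -> Rabs (exp a - 1) <= Rabs a.
Proof.
  intros Ha.
  assert (H := bounded_variation exp exp 1 a 0).
  rewrite exp_0, Rmult_1_l, Rminus_0_l, Rabs_Ropp in H.
  rewrite Rabs_minus_sym. apply H.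
  intros t Ht. rewrite (Rabs_left1 a Ha) in Ht. split.
  - apply is_derive_Reals, derivable_pt_lim_exp.
  - rewrite Rabs_pos_eq by (left; apply exp_pos).
    apply exp_le_1. apply Rabs_le_between' in Ht. lra.
Qed.

Lemma Rabs_exp_sub_1_sub_le a : a <= 0 -> Rabs (exp a - 1 - a) <= 2 * a^2.
Proof.
  intros Ha.
  assert (H := bounded_variation (fun t => exp t - t) (fun t => exp t - 1) (2 * Rabs a) a 0).
  cbv beta in H. rewrite exp_0, Rminus_0_l, Rabs_Ropp, Rabs_left1 in H by exact Ha.
  replace (exp a - 1 - a) with (- (1 - 0 - (exp a - a))) by ring. rewrite Rabs_Ropp.
  replace (2 * a^2) with (2 * - a * - a) by ring.
  apply H. intros t Ht. apply Rabs_le_between' in Ht. split.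
  - auto_derive; [exact I | ring].
  - apply Rle_trans with (Rabs t).
    + apply Rabs_exp_sub_1_le. lra.
    + apply Rabs_le. lra.
Qed.

Lemma Rabs_atan_le u : Rabs (atan u) <= Rabs u.
Proof.
  assert (H := bounded_variation atan (fun t => / (1 + t^2)) 1 0 u).
  rewrite atan_0, !Rminus_0_r, Rmult_1_l in H. apply H.
  intros t _. split.
  - apply is_derive_Reals, derivable_pt_lim_atan.
  - assert (0 <= t^2) by apply pow2_ge_0.
    rewrite Rabs_pos_eq by (left; apply Rinv_0_lt_compat; lra).
    rewrite <- Rinv_1. apply Rinv_le_contravar; lra.
Qed.

Lemma exp_opp_lower v : 0 <= v -> v / (1 + v) <= 1 - exp (- v).
Proof.
  intros Hv. rewrite exp_Ropp.
  assert (H1 := exp_ineq1_le v).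
  replace (v / (1 + v)) with (1 - / (1 + v)) by (field; lra).
  apply Rplus_le_compat_l, Ropp_le_contravar, Rinv_le_contravar; lra.
Qed.

Lemma Cmod_le_Rabs_add (u v : R) : Cmod (u, v) <= Rabs u + Rabs v.
Proof.
  assert (Hu := Rabs_pos u). assert (Hv := Rabs_pos v).
  unfold Cmod; cbn [fst snd].
  rewrite <- (sqrt_pow2 (Rabs u + Rabs v)) by lra. apply sqrt_le_1_alt.
  rewrite <- (pow2_abs u), <- (pow2_abs v). nra.
Qed.

Lemma Rabs_Im_le_Cmod (c : C) : Rabs (Im c) <= Cmod c.
Proof.
  destruct c as [u v]. unfold Cmod; cbn [Im fst snd].
  rewrite <- (sqrt_pow2 (Rabs v)) by apply Rabs_pos. apply sqrt_le_1_alt.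
  rewrite pow2_abs. assert (0 <= u^2) by apply pow2_ge_0. lra.
Qed.

Lemma Cmod_Cexp (u : C) : Cmod (Cexp u) = exp (fst u).
Proof.
  unfold Cmod, Cexp; cbn [fst snd].
  replace ((exp (fst u) * cos (snd u)) ^ 2 + (exp (fst u) * sin (snd u)) ^ 2)
    with (exp (fst u) ^ 2 * ((sin (snd u))² + (cos (snd u))²)) by (unfold Rsqr; ring).
  rewrite sin2_cos2, Rmult_1_r. apply sqrt_pow2. left; apply exp_pos.
Qed.

Lemma Cexp_add (a b : C) : Cexp (a + b) = (Cexp a * Cexp b)%C.
Proof.
  destruct a as [a1 a2], b as [b1 b2]. unfold Cexp, Cplus, Cmult; cbn [fst snd].
  rewrite exp_plus, cos_plus, sin_plus. f_equal; ring.
Qed.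

Lemma Cexp_0 : Cexp 0 = 1.
Proof. unfold Cexp, RtoC; cbn [fst snd]. rewrite exp_0, cos_0, sin_0. f_equal; ring. Qed.

Lemma Cmult_Cexp_eq (z a b : C) : (z * Cexp a = Cexp b)%C -> z = Cexp (b - a).
Proof.
  intros H.
  assert (Hb : Cexp b = (Cexp (b - a) * Cexp a)%C) by (rewrite <- Cexp_add; f_equal; ring).
  rewrite Hb in H.
  assert (Ha : (Cexp a * Cexp (- a))%C = 1) by (rewrite <- Cexp_add, Cplus_opp_r; apply Cexp_0).
  replace z with (z * Cexp a * Cexp (- a))%C by (rewrite <- Cmult_assoc, Ha; ring).
  rewrite H, <- Cmult_assoc, Ha. ring.
Qed.

Lemma Arg_Re_pos u v : 0 < u -> Arg (u, v) = atan (v / u).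
Proof. intros Hu. unfold Arg; cbn [fst snd]. destruct (Rlt_dec 0 u); [reflexivity | lra]. Qed.

Lemma Arg_Im_neg u v : v < 0 -> Arg (u, v) = - (PI/2) - atan (u / v).
Proof.
  intros Hv. unfold Arg; cbn [fst snd].
  destruct (Rlt_dec 0 u) as [Hu | Hu]; [|destruct (Rlt_dec u 0) as [Hu' | Hu']].
  - assert (H := atan_inv (u / - v) ltac:(apply Rdiv_lt_0_compat; lra)).
    replace (/ (u / - v)) with (- (v / u)) in H by (field; lra).
    replace (u / - v) with (- (u / v)) in H by (field; lra).
    rewrite !atan_opp in H. lra.
  - destruct (Rle_dec 0 v); [lra|].
    assert (Hp : 0 < u / v)
      by (replace (u / v) with ((-u) / (-v)) by (field; lra); apply Rdiv_lt_0_compat; lra).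
    assert (H := atan_inv (u / v) Hp).
    replace (/ (u / v)) with (v / u) in H by (field; lra). lra.
  - destruct (Rlt_dec 0 v); [lra|]. destruct (Rlt_dec v 0); [|lra].
    replace u with 0 by lra. unfold Rdiv. rewrite Rmult_0_l, atan_0. ring.
Qed.

Lemma Clog_Im_neg u v : v < 0 -> Clog (u, v) = (ln (u^2 + v^2) / 2, - (PI/2) - atan (u / v)).
Proof.
  intros Hv. unfold Clog. rewrite Arg_Im_neg by exact Hv. f_equal.
  assert (Hpos : 0 < u^2 + v^2) by nra.
  unfold Cmod; cbn [fst snd].
  rewrite <- (sqrt_sqrt (u^2 + v^2)) at 2 by lra.
  rewrite ln_mult by (apply sqrt_lt_R0; exact Hpos). field.
Qed.

Section Ray.

Variables x y : R.

(* (wre s, wim s) is w(s) = e^{sζ} - i for ζ = x + i y; when x < 0 it lies in the lower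
   half-plane, where (logmod s, argw s) is its principal logarithm (Clog_wC). *)
Definition wre (s : R) : R := exp (s * x) * cos (s * y).
Definition wim (s : R) : R := exp (s * x) * sin (s * y) - 1.
Definition wnorm2 (s : R) : R := wre s ^ 2 + wim s ^ 2.
Definition logmod (s : R) : R := ln (wnorm2 s) / 2.
Definition argw (s : R) : R := - (PI / 2) - atan (wre s / wim s).

Lemma wre_wim_sq s : wre s ^ 2 + (wim s + 1) ^ 2 = exp (s * x) ^ 2.
Proof.
  unfold wre, wim. assert (H := sin2_cos2 (s * y)). unfold Rsqr in H.
  replace (exp (s * x) ^ 2) with (exp (s * x) ^ 2 * 1) by ring. rewrite <- H. ring.
Qed.

Lemma wnorm2_pos s : wim s <> 0 -> 0 < wnorm2 s.
Proof.
  intros Hw. assert (0 < wim s ^ 2) by (apply pow2_gt_0; exact Hw).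
  assert (0 <= wre s ^ 2) by apply pow2_ge_0. unfold wnorm2. lra.
Qed.

(* Re (conj ζ (sζ - 2 (log w(s) - log w(0)))); for x < 0 its derivative
   |ζ|² (1 - |e^{sζ}|²) / |w(s)|² is nonnegative. *)
Definition conj_defect (s : R) : R :=
  s * (x^2 + y^2) - 2 * x * (logmod s - logmod 0) - 2 * y * (argw s - argw 0).

Lemma conj_defect_der s : wim s <> 0 ->
  is_derive conj_defect s ((x^2 + y^2) * (1 - exp (s * x) ^ 2) / wnorm2 s).
Proof.
  intros Hw. assert (HN := wnorm2_pos s Hw). rewrite <- wre_wim_sq.
  unfold conj_defect, logmod, argw, wnorm2, wre, wim in *.
  auto_derive.
  - repeat split; assumption.
  - field. split; [lra | assumption].
Qed.

(* Real and imaginary parts of sζ(1+i) - 2 (log w(s) - log w(0)) + s²ζ²/2, which vanishes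
   to third order at s = 0. *)
Definition taylor_rem_re (s : R) : R :=
  s * (x - y) - 2 * (logmod s - logmod 0) + s^2 * (x^2 - y^2) / 2.
Definition taylor_rem_im (s : R) : R :=
  s * (x + y) - 2 * (argw s - argw 0) + s^2 * x * y.

Definition zeta : C := (x, y).
Definition szeta (s : R) : C := (s * x, s * y).
Definition wC (s : R) : C := (wre s, wim s).
Definition exp_rem (s : R) : C := (wre s - 1 - s * x, wim s + 1 - s * y).
(* The derivative of the above, written through exp_rem s = e^{sζ} - 1 - sζ so that each
   term is visibly O(|ζ|³). *)
Definition taylor_rem_deriv (s : R) : C :=
  (((Ci - 1) * exp_rem s + szeta s * szeta s + szeta s * exp_rem s) * zeta / wC s)%C.

Lemma taylor_rem_re_der s : wim s <> 0 -> is_derive taylor_rem_re s (Re (taylor_rem_deriv s)).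
Proof.
  intros Hw. assert (HN := wnorm2_pos s Hw).
  unfold taylor_rem_deriv, zeta, szeta, wC, exp_rem, taylor_rem_re,
    logmod, argw, wnorm2, wre, wim in *.
  auto_derive.
  - repeat split; assumption.
  - unfold Cdiv, Cmult, Cinv, Cplus, Cminus, Copp, RtoC, Ci, Re; simpl. field. lra.
Qed.

Lemma taylor_rem_im_der s : wim s <> 0 -> is_derive taylor_rem_im s (Im (taylor_rem_deriv s)).
Proof.
  intros Hw. assert (HN := wnorm2_pos s Hw).
  unfold taylor_rem_deriv, zeta, szeta, wC, exp_rem, taylor_rem_im,
    logmod, argw, wnorm2, wre, wim in *.
  auto_derive.
  - repeat split; assumption.
  - unfold Cdiv, Cmult, Cinv, Cplus, Cminus, Copp, RtoC, Ci, Im; simpl.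
    field. split; [lra | assumption].
Qed.

Hypothesis x_neg : x < 0.

Lemma exp_sx_bounds s : 0 <= s -> 0 < exp (s * x) <= 1.
Proof. intros Hs. split; [apply exp_pos | apply exp_le_1; nra]. Qed.

Lemma wim_neg s : 0 <= s -> wim s < 0.
Proof.
  intros Hs. assert (E := exp_sx_bounds s Hs). assert (Hsin := SIN_bound (s * y)). unfold wim.
  destruct (Rle_lt_or_eq_dec 0 s Hs) as [Hs0 | <-].
  - assert (exp (s * x) < 1) by (rewrite <- exp_0; apply exp_increasing; nra). nra.
  - rewrite !Rmult_0_l, sin_0. lra.
Qed.

Lemma wnorm2_le_4 s : 0 <= s -> wnorm2 s <= 4.
Proof.
  intros Hs. assert (E := exp_sx_bounds s Hs). assert (Hsin := SIN_bound (s * y)).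
  assert (H := wre_wim_sq s). unfold wnorm2. unfold wim in *. nra.
Qed.

Lemma Clog_wC s : 0 <= s -> Clog (wC s) = (logmod s, argw s).
Proof. intros Hs. unfold wC. rewrite Clog_Im_neg by (apply wim_neg; exact Hs). reflexivity. Qed.

Lemma conj_defect_der_lower s : 0 <= s <= 1 ->
  (x^2 + y^2) * s * (- x) / (2 * (1 - 2 * x))
  <= (x^2 + y^2) * (1 - exp (s * x) ^ 2) / wnorm2 s.
Proof.
  intros Hs. set (m := x^2 + y^2). assert (Hm : 0 <= m) by (unfold m; nra).
  assert (HN : 0 < wnorm2 s) by (apply wnorm2_pos, Rlt_not_eq, wim_neg; lra).
  assert (HN4 := wnorm2_le_4 s (proj1 Hs)).
  assert (He : exp (s * x) ^ 2 = exp (- (2 * s * - x)))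
    by (replace (- (2 * s * - x)) with (s * x + s * x) by ring; rewrite exp_plus; ring).
  assert (Hv := exp_opp_lower (2 * s * - x) ltac:(nra)). rewrite <- He in Hv.
  assert (Hv' : 2 * s * - x / (1 - 2 * x) <= 2 * s * - x / (1 + 2 * s * - x)).
  { apply Rmult_le_compat_l; [nra|]. apply Rinv_le_contravar; nra. }
  apply Rle_trans with (m * (1 - exp (s * x) ^ 2) / 4).
  - replace (m * s * - x / (2 * (1 - 2 * x))) with (m * (2 * s * - x / (1 - 2 * x)) / 4) by (field; lra).
    apply Rmult_le_compat_r; [lra|]. apply Rmult_le_compat_l; lra.
  - assert (E := exp_sx_bounds s (proj1 Hs)).
    apply Rmult_le_compat_l; [apply Rmult_le_pos; nra|]. apply Rinv_le_contravar; lra.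
Qed.

Lemma conj_defect_lower : (x^2 + y^2) * (- x) <= 4 * (1 - 2 * x) * conj_defect 1.
Proof.
  set (m := x^2 + y^2). set (k := m * (- x) / (4 * (1 - 2 * x))).
  destruct (MVT_unit_interval (fun s => conj_defect s - k * s^2)
    (fun s => m * (1 - exp (s * x) ^ 2) / wnorm2 s - 2 * k * s)) as (c & Hc & Hr).
  - intros s Hs. apply (is_derive_minus conj_defect (fun s => k * s^2)).
    + apply conj_defect_der, Rlt_not_eq, wim_neg. lra.
    + auto_derive; [exact I | ring].
  - assert (H0 : conj_defect 0 = 0) by (unfold conj_defect; ring).
    assert (Hd := conj_defect_der_lower c Hc). fold m in Hd.
    assert (Hk : 2 * k * c = m * c * - x / (2 * (1 - 2 * x))) by (unfold k; field; lra).
    cbv beta in Hr. rewrite H0 in Hr.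
    replace (m * - x) with (4 * (1 - 2 * x) * k) by (unfold k; field; lra).
    apply Rmult_le_compat_l; lra.
Qed.

Lemma sq_szeta_le s : 0 <= s <= 1 -> (s * x)^2 + (s * y)^2 <= x^2 + y^2.
Proof.
  intros Hs. replace ((s * x)^2 + (s * y)^2) with (s^2 * (x^2 + y^2)) by ring.
  assert (s^2 <= 1) by nra. assert (0 <= x^2 + y^2) by nra. nra.
Qed.

Lemma Cmod_exp_rem_le s : 0 <= s <= 1 -> x^2 + y^2 <= 1 -> Cmod (exp_rem s) <= 3 * (x^2 + y^2).
Proof.
  intros Hs Hm. assert (E := exp_sx_bounds s (proj1 Hs)). assert (Hab := sq_szeta_le s Hs).
  unfold exp_rem, wre, wim. set (a := s * x) in *. set (b := s * y) in *.
  assert (Ha : a <= 0) by (unfold a; nra).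
  assert (Hb : Rabs b <= 1) by (rewrite <- (pow2_abs b) in Hab; assert (H := Rabs_pos b); nra).
  assert (H1 : Rabs (exp a * cos b - 1 - a) <= b^2 / 2 + 2 * a^2).
  { replace (exp a * cos b - 1 - a) with (exp a * (cos b - 1) + (exp a - 1 - a)) by ring.
    eapply Rle_trans; [apply Rabs_triang|].
    rewrite Rabs_mult, (Rabs_pos_eq (exp a)) by lra.
    assert (Hc := one_sub_cos_bound b). assert (He := Rabs_exp_sub_1_sub_le a Ha).
    rewrite (Rabs_left1 (cos b - 1)) by lra. nra. }
  assert (H2 : Rabs (exp a * sin b - 1 + 1 - b) <= b^2 / 2 + Rabs a * Rabs b).
  { replace (exp a * sin b - 1 + 1 - b) with (exp a * (sin b - b) + (exp a - 1) * b) by ring.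
    eapply Rle_trans; [apply Rabs_triang|].
    rewrite !Rabs_mult, (Rabs_pos_eq (exp a)) by lra.
    assert (Hsb := Rabs_sin_sub_le b). assert (He := Rabs_exp_sub_1_le a Ha).
    assert (0 <= b^2) by apply pow2_ge_0.
    assert (H0 := Rabs_pos b). assert (H0' := Rabs_pos (sin b - b)).
    assert (H0'' := Rabs_pos (exp a - 1)).
    nra. }
  eapply Rle_trans; [apply Cmod_le_Rabs_add|].
  assert (Hp : Rabs a * Rabs b <= (a^2 + b^2) / 2)
    by (rewrite <- (pow2_abs a), <- (pow2_abs b); assert (0 <= (Rabs a - Rabs b)^2) by apply pow2_ge_0; nra).
  nra.
Qed.

Lemma Cmod_wC_ge_half s : 0 <= s <= 1 -> x^2 + y^2 <= 1/16 -> 1/2 <= Cmod (wC s).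
Proof.
  intros Hs Hm. assert (E := exp_sx_bounds s (proj1 Hs)). assert (H := wre_wim_sq s).
  assert (Hb : sin (s * y) <= 1/4).
  { apply Rle_trans with (Rabs (s * y)); [eapply Rle_trans; [apply Rle_abs | apply Rabs_sin_le]|].
    rewrite <- (sqrt_pow2 (Rabs _)) by apply Rabs_pos. rewrite pow2_abs.
    rewrite <- (sqrt_pow2 (1/4)) by lra. apply sqrt_le_1_alt. nra. }
  unfold Cmod, wC; cbn [fst snd]. rewrite <- (sqrt_pow2 (1/2)) by lra. apply sqrt_le_1_alt.
  unfold wim in *. nra.
Qed.

Lemma Cmod_taylor_rem_deriv_le s : 0 <= s <= 1 -> x^2 + y^2 <= 1/16 ->
  Cmod (taylor_rem_deriv s) <= 13 * (x^2 + y^2) * sqrt (x^2 + y^2).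
Proof.
  intros Hs Hm. assert (Hsz := sq_szeta_le s Hs).
  assert (Hrem := Cmod_exp_rem_le s Hs ltac:(lra)). assert (Hw := Cmod_wC_ge_half s Hs Hm).
  set (m := x^2 + y^2) in *. set (r := sqrt m).
  assert (Hm0 : 0 <= m) by (unfold m; nra).
  assert (Hr : r ^ 2 = m) by (unfold r; rewrite <- Rsqr_pow2; apply Rsqr_sqrt; exact Hm0).
  assert (Hr0 : 0 <= r) by apply sqrt_pos.
  assert (Hsz' : Cmod (szeta s) <= r) by (apply sqrt_le_1_alt, Hsz).
  assert (Hz : Cmod zeta = r) by reflexivity.
  assert (Hi : Cmod (Ci - 1) <= 3/2).
  { unfold Cmod; cbn [fst snd]. rewrite <- (sqrt_pow2 (3/2)) by lra. apply sqrt_le_1_alt. simpl. lra. }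
  assert (Hnum : Cmod ((Ci - 1) * exp_rem s + szeta s * szeta s + szeta s * exp_rem s) <= 25/4 * m).
  { eapply Rle_trans; [apply Cmod_triangle|].
    eapply Rle_trans; [apply Rplus_le_compat_r, Cmod_triangle|].
    rewrite !Cmod_mult.
    assert (H0 := Cmod_ge_0 (exp_rem s)). assert (H1 := Cmod_ge_0 (szeta s)).
    assert (H2 := Cmod_ge_0 (Ci - 1)). assert (Hr4 : r <= 1/4) by nra.
    assert (Cmod (Ci - 1) * Cmod (exp_rem s) <= 3/2 * (3 * m)) by (apply Rmult_le_compat; lra).
    assert (Cmod (szeta s) * Cmod (szeta s) <= r * r) by (apply Rmult_le_compat; lra).
    assert (Cmod (szeta s) * Cmod (exp_rem s) <= 1/4 * (3 * m)) by (apply Rmult_le_compat; lra).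
    nra. }
  assert (Hw0 : wC s <> 0%C) by (intro H; rewrite H, Cmod_0 in Hw; lra).
  unfold taylor_rem_deriv. rewrite Cmod_div, Cmod_mult, Hz by exact Hw0.
  assert (H0 := Cmod_ge_0 ((Ci - 1) * exp_rem s + szeta s * szeta s + szeta s * exp_rem s)).
  apply Rle_trans with (25/4 * m * r / (1/2)).
  - unfold Rdiv. apply Rmult_le_compat.
    + apply Rmult_le_pos; lra.
    + left. apply Rinv_0_lt_compat. lra.
    + apply Rmult_le_compat_r; lra.
    + apply Rinv_le_contravar; lra.
  - nra.
Qed.

Lemma taylor_rem_bound : x^2 + y^2 <= 1/16 ->
  Rabs (taylor_rem_re 1) <= 13 * (x^2 + y^2) * sqrt (x^2 + y^2) /\
  Rabs (taylor_rem_im 1) <= 13 * (x^2 + y^2) * sqrt (x^2 + y^2).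
Proof.
  intros Hm.
  assert (Hw : forall s, 0 <= s <= 1 -> wim s <> 0)
    by (intros s Hs; apply Rlt_not_eq, wim_neg; lra).
  split.
  - destruct (MVT_unit_interval taylor_rem_re (fun s => Re (taylor_rem_deriv s))) as (c & Hc & H).
    + intros s Hs. apply taylor_rem_re_der, Hw, Hs.
    + assert (H0 : taylor_rem_re 0 = 0) by (unfold taylor_rem_re; lra).
      rewrite H0, Rminus_0_r in H. rewrite H.
      eapply Rle_trans; [apply re_le_Cmod | apply Cmod_taylor_rem_deriv_le; assumption].
  - destruct (MVT_unit_interval taylor_rem_im (fun s => Im (taylor_rem_deriv s))) as (c & Hc & H).
    + intros s Hs. apply taylor_rem_im_der, Hw, Hs.
    + assert (H0 : taylor_rem_im 0 = 0) by (unfold taylor_rem_im; lra).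
      rewrite H0, Rminus_0_r in H. rewrite H.
      eapply Rle_trans; [apply Rabs_Im_le_Cmod | apply Cmod_taylor_rem_deriv_le; assumption].
Qed.

End Ray.

Lemma loewner_log_increments (z : C) (t : R) :
  in_disc z -> phi z = Cmult (Cexp (Cmult (Ci - 1) (RtoC t))) (phi 1) ->
  exists x y, z = (exp x * cos y, exp x * sin y) /\ x < 0 /\
    logmod x y 1 - logmod x y 0 = t + (x - y) / 2 /\
    argw x y 1 - argw x y 0 = (x + y) / 2.
Proof.
  intros Hz Hphi. unfold phi, Defs.Cpow in Hphi.
  rewrite Cmult_1_l, <- Cexp_add in Hphi. apply Cmult_Cexp_eq in Hphi.
  (* z = e^ζ with ζ = (i-1) (t + log (1-i) - log (z-i)), not the principal logarithm of z *)
  remember (_ - _)%C as zeta eqn:Hzeta in Hphi. destruct zeta as [x y].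
  exists x, y. split; [exact Hphi|].
  assert (Hx : x < 0).
  { unfold in_disc in Hz. rewrite Hphi, Cmod_Cexp, <- exp_0 in Hz. apply exp_lt_inv, Hz. }
  split; [exact Hx|].
  assert (Hw1 : (z - Ci)%C = wC x y 1).
  { rewrite Hphi. unfold wC, wre, wim, Cexp, Ci, Cminus, Cplus, Copp; cbn [fst snd].
    rewrite !Rmult_1_l. f_equal; ring. }
  assert (Hw0 : (1 - Ci)%C = wC x y 0).
  { unfold wC, wre, wim, Ci, Cminus, Cplus, Copp, RtoC; cbn [fst snd].
    rewrite !Rmult_0_l, exp_0, cos_0, sin_0. f_equal; ring. }
  rewrite Hw1, Hw0, !Clog_wC in Hzeta by lra.
  assert (Hre := f_equal fst Hzeta). assert (Him := f_equal snd Hzeta).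
  unfold Cmult, Cplus, Cminus, Copp, Ci, RtoC in Hre, Him; simpl in Hre, Him.
  split; lra.
Qed.

Lemma sqmod_le_of_conj_defect x y t : x < 0 -> t <= 1/384 ->
  (x^2 + y^2) * (- x) <= 4 * (1 - 2 * x) * (-2 * t * x) -> x^2 + y^2 <= 24 * t.
Proof.
  intros Hx Ht H. set (m := x^2 + y^2) in *.
  assert (Hm : m <= 8 * t * (1 - 2 * x)).
  { apply (Rmult_le_reg_r (- x)); [lra|]. nra. }
  assert (Hxm : x^2 <= m) by (unfold m; nra).
  assert (Hm1 : m < 1).
  { destruct (Rlt_le_dec m 1) as [|Hge]; [assumption|]. exfalso. assert (- x <= m) by nra. nra. }
  nra.
Qed.

Lemma slope_lt_of_taylor x y t e : x < 0 -> 0 < e ->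
  x^2 + y^2 <= 24 * t -> sqrt (x^2 + y^2) <= 1/312 -> sqrt (x^2 + y^2) < e / 156 ->
  Rabs (-2 * t + (x^2 - y^2) / 2) <= 13 * (x^2 + y^2) * sqrt (x^2 + y^2) ->
  Rabs (x * y) <= 13 * (x^2 + y^2) * sqrt (x^2 + y^2) ->
  Rabs y < e * - x.
Proof.
  intros Hx He Hm Hr1 Hre Hre_rem Him_rem. set (m := x^2 + y^2) in *. set (r := sqrt m) in *.
  assert (Hr0 : 0 <= r) by apply sqrt_pos.
  assert (Ht : 0 < t) by (unfold m in Hm; nra).
  assert (Hrem : 13 * m * r <= 312 * t * r) by nra.
  assert (Hx2 : 2 * t <= x^2).
  { apply Rabs_le_between in Hre_rem. assert (0 <= y^2) by apply pow2_ge_0. nra. }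
  assert (Hxy : Rabs x * Rabs y < e * - x * Rabs x).
  { rewrite <- Rabs_mult, (Rabs_left x) by exact Hx. nra. }
  rewrite (Rabs_left x) in Hxy by exact Hx. nra.
Qed.

Lemma slope_lt_of_increments x y t e : x < 0 -> 0 < e ->
  24 * t < Rmin (1/312) (e/156) ^ 2 ->
  logmod x y 1 - logmod x y 0 = t + (x - y) / 2 ->
  argw x y 1 - argw x y 0 = (x + y) / 2 ->
  Rabs y < e * - x.
Proof.
  intros Hx He Ht HL HT. set (r := Rmin (1/312) (e/156)) in *.
  assert (Hr1 : r <= 1/312) by apply Rmin_l.
  assert (Hre : r <= e/156) by apply Rmin_r.
  assert (Hr0 : 0 < r) by (apply Rmin_pos; lra).
  assert (Hq : conj_defect x y 1 = -2 * t * x) by (unfold conj_defect; rewrite HL, HT; field).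
  assert (Hm := conj_defect_lower x y Hx). rewrite Hq in Hm.
  apply sqmod_le_of_conj_defect in Hm; [|exact Hx|nra].
  assert (Hsqrt : sqrt (x^2 + y^2) < r).
  { rewrite <- (sqrt_pow2 r) by lra. apply sqrt_lt_1_alt. split; [nra | lra]. }
  assert (Hre_eq : taylor_rem_re x y 1 = -2 * t + (x^2 - y^2) / 2)
    by (unfold taylor_rem_re; rewrite HL; field).
  assert (Him_eq : taylor_rem_im x y 1 = x * y) by (unfold taylor_rem_im; rewrite HT; field).
  destruct (taylor_rem_bound x y Hx ltac:(nra)) as [Hre_rem Him_rem].
  rewrite Hre_eq in Hre_rem. rewrite Him_eq in Him_rem.
  apply (slope_lt_of_taylor x y t e); assumption || lra.
Qed.

Lemma Arg_one_sub_exp_lt x y e : x < 0 -> Rabs y < e * - x ->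
  Rabs (Arg (Cminus 1 (exp x * cos y, exp x * sin y))) < e.
Proof.
  intros Hx Hy.
  assert (He : 0 < exp x < 1) by (split; [apply exp_pos | rewrite <- exp_0; apply exp_increasing; lra]).
  assert (Hc := COS_bound y). assert (Hsin := Rabs_sin_le y).
  assert (Hex : exp x * - x <= 1 - exp x).
  { assert (H1 := exp_ineq1_le (- x)).
    assert (H2 : exp x * exp (- x) = 1) by (rewrite <- exp_plus, Rplus_opp_r; apply exp_0). nra. }
  assert (Hre : 0 < 1 - exp x * cos y) by nra.
  replace (Cminus 1 (exp x * cos y, exp x * sin y)) with (1 - exp x * cos y, - (exp x * sin y))
    by (unfold Cminus, Cplus, Copp, RtoC; cbn [fst snd]; f_equal; ring).
  rewrite Arg_Re_pos by exact Hre.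
  eapply Rle_lt_trans; [apply Rabs_atan_le|].
  rewrite Rabs_div, Rabs_Ropp, Rabs_mult, (Rabs_pos_eq (exp x)), (Rabs_pos_eq (1 - _)) by lra.
  apply Rlt_div_l; [exact Hre|].
  assert (Hpos : 0 < e) by (assert (H0 := Rabs_pos y); nra).
  assert (e * (exp x * - x) <= e * (1 - exp x * cos y)) by (apply Rmult_le_compat_l; nra).
  apply Rle_lt_trans with (exp x * Rabs y); [apply Rmult_le_compat_l; lra|]. nra.
Qed.

Theorem proposition3p2 (gamma : R -> C) :
  (exists eps : R, 0 < eps /\
     forall t : R, 0 < t < eps ->
       in_disc (gamma t) /\
       phi (gamma t) = Cmult (Cexp (Cmult (Ci - 1) (RtoC t))) (phi 1)) ->
  filterlim (fun t => Arg (Cminus 1 (gamma t))) (at_right 0) (locally 0).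
Proof.
  intros (eps & Heps & Hgamma).
  apply filterlim_locally. intros [e He]; simpl.
  set (delta := Rmin eps (Rmin (1/312) (e/156) ^ 2 / 24)).
  assert (Hdelta : 0 < delta).
  { apply Rmin_pos; [exact Heps|]. assert (0 < Rmin (1/312) (e/156)) by (apply Rmin_pos; lra). nra. }
  exists (mkposreal delta Hdelta). intros t Ht Htpos.
  change (Rabs (t - 0) < delta) in Ht. rewrite Rminus_0_r, Rabs_pos_eq in Ht by lra.
  assert (Hte : t < eps) by (eapply Rlt_le_trans; [exact Ht | apply Rmin_l]).
  assert (Htr : 24 * t < Rmin (1/312) (e/156) ^ 2)
    by (assert (t < Rmin (1/312) (e/156) ^ 2 / 24)
          by (eapply Rlt_le_trans; [exact Ht | apply Rmin_r]); lra).
  destruct (Hgamma t ltac:(lra)) as [Hdisc Hphi].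
  destruct (loewner_log_increments _ _ Hdisc Hphi) as (x & y & Hz & Hx & HL & HT).
  change (Rabs (Arg (Cminus 1 (gamma t)) - 0) < e). rewrite Rminus_0_r, Hz.
  apply Arg_one_sub_exp_lt; [exact Hx|].
  exact (slope_lt_of_increments x y t e Hx He Htr HL HT).
Qed.
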